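(* Let $(u_n)_{n\ge0}$ be a linear recurrence sequence of order $k$ with period $M$, and let $U_1,\dots,U_M$ be the associated polynomials (defined below). If $u_{A+j\ell}=0$ for $j=0,1,\dots,k-1$, where $A\equiv a\pmod M$ with $1\le a\le M$, $A\ge0$, and $\ell>0$ is divisible by $M$, then $U_a(x,y_1,\dots,y_r)=0$ identically (in particular $u_n=0$ for all $n\ge0$ with $n\equiv a\pmod M$).
   Context: Write the sequence as $u_n=\sum_{i=1}^mg_i(n)\alpha_i^n$ with distinct nonzero characteristic roots $\alpha_i$ and polynomials $g_i$. The period $M$ is the smallest $M\ge1$ such that whenever $\alpha_1^{e_1}\cdots\alpha_m^{e_m}$ ($e_i\in\mathbb Z$) is a root of unity, it is an $M$-th root of unity. Fix a primitive $M$-th root of unity $\zeta_M$ and multiplicatively independent algebraic numbers $\gamma_1,\dots,\gamma_r$ with $\alpha_i=\zeta_M^{e_{i,0}}\gamma_1^{e_{i,1}}\cdots\gamma_r^{e_{i,r}}$ ($e_{i,j}\in\mathbb Z$). For $1\le a\le M$ put $U_a(x,y_1,\dots,y_r)=\sum_{i=1}^mg_i(x)\zeta_M^{e_{i,0}a}y_1^{e_{i,1}}\cdots y_r^{e_{i,r}}$ (a polynomial in $x$ and Laurent polynomial in the $y_j$, with terms having equal exponent vectors combined), so that $u_n=U_a(n,\gamma_1^n,\dots,\gamma_r^n)$ for every $n\equiv a\pmod M$. *)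

From mathcomp Require Import all_boot all_order all_algebra all_field.
Set Implicit Arguments. Unset Strict Implicit. Unset Printing Implicit Defensive.
Import Order.TTheory GRing.Theory Num.Theory.
Local Open Scope ring_scope.

Definition has_recurrence (u : nat -> algC) (k : nat) : Prop :=
  exists c : 'I_k -> algC, forall n : nat,
    u (n + k)%N = \sum_(j < k) c j * u (n + j)%N.

Definition lrs_order (u : nat -> algC) (k : nat) : Prop :=
  has_recurrence u k /\ forall k' : nat, has_recurrence u k' -> (k <= k')%N.

Definition mprod (m : nat) (alpha : 'I_m -> algC) (e : 'I_m -> int) : algC :=
  \prod_(i < m) alpha i ^ e i.

Definition period_prop (m : nat) (alpha : 'I_m -> algC) (M : nat) : Prop :=
  (0 < M)%N /\
  forall e : 'I_m -> int,
    (exists n : nat, (0 < n)%N /\ mprod alpha e ^+ n = 1) -> mprod alpha e ^+ M = 1.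

Definition is_period (m : nat) (alpha : 'I_m -> algC) (M : nat) : Prop :=
  period_prop alpha M /\ forall M' : nat, period_prop alpha M' -> (M <= M')%N.

Definition mult_indep (r : nat) (gamma : 'I_r -> algC) : Prop :=
  (forall j, gamma j != 0) /\
  forall e : 'I_r -> int, \prod_(j < r) gamma j ^ e j = 1 -> forall j, e j = 0.

(* U_a(x, y) = sum_i g_i(x) zeta^{e_{i,0} a} y^{e_i}; its coefficient (a polynomial
   in x) at the monomial y^v, after combining terms with equal exponent vectors *)
Definition U_coef (m r : nat) (g : 'I_m -> {poly algC}) (zeta : algC)
  (e0 : 'I_m -> int) (e : 'I_m -> {ffun 'I_r -> int}) (a : nat)
  (v : {ffun 'I_r -> int}) : {poly algC} :=
  \sum_(i < m | e i == v) (zeta ^ (e0 i * a%:Z)) *: g i.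

Definition U_zero (m r : nat) (g : 'I_m -> {poly algC}) (zeta : algC)
  (e0 : 'I_m -> int) (e : 'I_m -> {ffun 'I_r -> int}) (a : nat) : Prop :=
  forall v : {ffun 'I_r -> int}, U_coef g zeta e0 e a v = 0.

From mathcomp Require Import all_boot all_order all_algebra all_field.
From mathcomp Require Import ring zify.
Import Order.TTheory GRing.Theory Num.Theory.

Set Implicit Arguments.
Unset Strict Implicit.
Unset Printing Implicit Defensive.

Local Open Scope ring_scope.

(* For [n = a (mod M)] the root-of-unity part of [alpha_i ^ n] is frozen, so
   [u_n = sum_w U_w(n) (gamma^w)^n] is a generalized power sum in the monomials
   [gamma^w], with [U_a = sum_w U_w(x) y^w].  Along [n = A + j l] the sequence
   [j |-> u_(A + j l)] still satisfies a recurrence of length [k] (powers of the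
   companion matrix and Cayley-Hamilton), so its [k] initial zeros make it vanish
   identically.  As a function of [j] it is a generalized power sum with the
   pairwise distinct bases [(gamma^w)^l] (multiplicative independence), and such a
   sum vanishes only if all its polynomial coefficients do (finite differences).
   Hence each [U_w] vanishes on the progression, so [U_w = 0]. *)

Lemma poly_eq0_natr_progression (R : numDomainType) (p : {poly R}) (c d : nat) :
  (0 < d)%N -> (forall j : nat, p.[(c + j * d)%:R] = 0) -> p = 0.
Proof.
move=> d_gt0 p_root; apply/eqP; apply: contraT => p_neq0.
have := max_poly_roots (rs := [seq (c + j * d)%:R | j <- iota 0 (size p)]) p_neq0.
rewrite size_map size_iota ltnn; apply.
  by apply/allP => x /mapP [j _ ->]; apply/rootP.
rewrite map_inj_uniq ?iota_uniq // => i j /eqP.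
by rewrite eqr_nat eqn_add2l eqn_pmul2r // => /eqP.
Qed.

Section ShiftDifference.

Variable R : idomainType.
Implicit Types (b c x : R) (Q : {poly R}).

(* [(E - c) (Q(n) b^n) = (shift_diff b c Q)(n) b^n], with [E] the shift [n |-> n+1]. *)
Definition shift_diff b c Q : {poly R} := b *: (Q \Po ('X + 1%:P)) - c *: Q.

Lemma horner_shift_diff b c Q x :
  (shift_diff b c Q).[x] = b * Q.[x + 1] - c * Q.[x].
Proof. by rewrite hornerD hornerN !hornerZ horner_comp hornerD hornerX hornerC. Qed.

Lemma size_shift_diff b c Q : (size (shift_diff b c Q) <= size Q)%N.
Proof.
apply: leq_trans (size_polyD _ _) _; rewrite size_polyN geq_max.
by rewrite !(leq_trans (size_scale_leq _ _)) // size_comp_poly2 // size_XaddC.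
Qed.

Lemma coef_shift_diff_top b c Q :
  (shift_diff b c Q)`_(size Q).-1 = (b - c) * lead_coef Q.
Proof.
rewrite coefD coefN !coefZ mulrBl; congr (b * _ - _).
rewrite -[in LHS](size_comp_poly2 Q (size_XaddC 1)) -/(lead_coef _).
by rewrite lead_coef_comp ?size_XaddC // lead_coefXaddC expr1n mulr1.
Qed.

Lemma size_shift_diff_lt b Q : Q != 0 -> (size (shift_diff b b Q) < size Q)%N.
Proof.
move=> Q_neq0; rewrite ltn_neqAle size_shift_diff andbT; apply/eqP => size_eq.
have := coef_shift_diff_top b b Q; rewrite subrr mul0r -size_eq -/(lead_coef _).
by move/eqP; rewrite lead_coef_eq0 -size_poly_eq0 size_eq size_poly_eq0 (negbTE Q_neq0).
Qed.

Lemma shift_diff_neq0 b c Q : b != c -> Q != 0 -> shift_diff b c Q != 0.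
Proof.
move=> b_neq_c Q_neq0; apply: contraNneq Q_neq0 => Qc_eq0.
have := coef_shift_diff_top b c Q; rewrite Qc_eq0 coef0 => /esym/eqP.
by rewrite mulf_eq0 subr_eq0 (negbTE b_neq_c) lead_coef_eq0.
Qed.

End ShiftDifference.

Section GeneralizedPowerSums.

Variables (R : numDomainType) (T : eqType).
Implicit Types (s : seq T) (Q : T -> {poly R}) (beta : T -> R).

Definition gpsum s Q beta (n : nat) : R := \sum_(t <- s) (Q t).[n%:R] * beta t ^+ n.

Lemma gpsum_shift_diff s Q beta (c : R) :
  (forall n, gpsum s Q beta n = 0) ->
  forall n, gpsum s (fun t => shift_diff (beta t) c (Q t)) beta n = 0.
Proof.
move=> Q_gpsum0 n; rewrite /gpsum.
rewrite (eq_bigr (fun t => (Q t).[n.+1%:R] * beta t ^+ n.+1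
                        - c * ((Q t).[n%:R] * beta t ^+ n))); last first.
  by move=> t _; rewrite horner_shift_diff natr1 exprS; ring.
by rewrite sumrB -mulr_sumr -!/(gpsum _ _ _ _) !Q_gpsum0 mulr0 subrr.
Qed.

(* Induction on the total size of the polynomials: applying [E - beta t0]
   lowers the degree of [Q t0] and does not raise the others. *)
Lemma gpsum_eq0_polys_eq0 s Q beta :
  uniq s -> {in s &, injective beta} -> {in s, forall t, beta t != 0} ->
  (forall n, gpsum s Q beta n = 0) -> {in s, forall t, Q t = 0}.
Proof.
move: {-1}(\sum_(t <- s) (size (Q t)).+1)%N
  (leqnn (\sum_(t <- s) (size (Q t)).+1)%N) => N.
elim: N s Q => [|N IH] [|t0 s] Q //; rewrite big_cons // => size_le.
move=> /= /andP [t0_notin_s s_uniq] beta_inj beta_neq0 Q_gpsum0.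
have beta_inj_s : {in s &, injective beta}.
  by move=> x y xs ys; apply: beta_inj; rewrite inE ?xs ?ys orbT.
have [Qt0_eq0|Qt0_neq0] := eqVneq (Q t0) 0.
  have Qs_eq0 : {in s, forall t, Q t = 0}.
    apply: (IH s Q) => //; first lia.
      by move=> t ts; apply: beta_neq0; rewrite inE ts orbT.
    move=> n; have := Q_gpsum0 n.
    by rewrite /gpsum big_cons Qt0_eq0 horner0 mul0r add0r.
  by move=> t; rewrite inE => /predU1P [->|/Qs_eq0].
pose Q' t := shift_diff (beta t) (beta t0) (Q t).
have Q'_eq0 : {in t0 :: s, forall t, Q' t = 0}.
  apply: IH => //=; last exact: gpsum_shift_diff; last by rewrite t0_notin_s.
  have size_t0 : (size (Q' t0) < size (Q t0))%N := size_shift_diff_lt _ Qt0_neq0.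
  have size_s : (\sum_(t <- s) (size (Q' t)).+1 <= \sum_(t <- s) (size (Q t)).+1)%N.
    by apply: leq_sum => t _; rewrite ltnS size_shift_diff.
  rewrite big_cons -ltnS (leq_trans _ size_le) // -addSn leq_add //=; exact: size_s.
have Qs_eq0 : {in s, forall t, Q t = 0}.
  move=> t ts; apply/eqP; apply: contraT => Qt_neq0.
  have beta_t_neq : beta t != beta t0.
    by apply: contraNneq t0_notin_s => /beta_inj <-; rewrite ?inE ?ts ?eqxx ?orbT.
  have ts' : t \in t0 :: s by rewrite inE ts orbT.
  have := shift_diff_neq0 beta_t_neq Qt_neq0.
  by rewrite -/(Q' t) (Q'_eq0 t ts') eqxx.
have Qt0_eq0 : Q t0 = 0.
  apply: (@poly_eq0_natr_progression _ _ 0 1) => // n; rewrite add0n muln1.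
  have := Q_gpsum0 n; rewrite /gpsum big_cons big1_seq ?addr0; last first.
    by move=> t /andP [_ ts]; rewrite Qs_eq0 // horner0 mul0r.
  move/eqP; rewrite mulf_eq0 expf_eq0 (negbTE (beta_neq0 t0 _)) ?mem_head // andbF orbF.
  by move/eqP.
by move=> t; rewrite inE => /predU1P [->|/Qs_eq0].
Qed.

End GeneralizedPowerSums.

Lemma horner_mx_coefE (R : comNzRingType) (n : nat) (B : 'M[R]_n.+1) (p : {poly R}) :
  horner_mx B p = \sum_(t < size p) p`_t *: B ^+ t.
Proof.
rewrite -[in LHS](coefK p) poly_def rmorph_sum; apply: eq_bigr => t _.
by rewrite -mul_polyC rmorphM rmorphXn /= horner_mx_C horner_mx_X -mul_scalar_mx.
Qed.

(* The coefficients of the recurrence are those of [char_poly B] (Cayley-Hamilton). *)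
Lemma has_recurrence_mxpow (p n : nat) (Y : 'M[algC]_(p, n.+1)) (B : 'M_n.+1) i j :
  has_recurrence (fun t => (Y *m B ^+ t) i j) n.+1.
Proof.
pose chi := char_poly B.
have chi_top : chi`_n.+1 = 1.
  by have /monicP := char_poly_monic B; rewrite /lead_coef size_char_poly.
exists (fun s => - chi`_s) => t.
have := congr1 (fun C => (Y *m B ^+ t *m C) i j) (Cayley_Hamilton B).
rewrite /= horner_mx_coefE size_char_poly big_ord_recr /= -/chi chi_top scale1r.
rewrite mulmxDr mulmx_sumr mulmx0 [in RHS]mxE [_ i j]mxE summxE.
move=> /eqP; rewrite addrC addr_eq0 exprD mulmxA => /eqP ->.
rewrite -sumrN; apply: eq_bigr => s _.
by rewrite -scalemxAr mxE exprD mulmxA mulNr.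
Qed.

(* [C] is the companion matrix, acting on rows of [k.+1] consecutive terms. *)
Lemma has_recurrence_mxpowE (u : nat -> algC) (k : nat) :
  has_recurrence u k.+1 ->
  exists (Y : 'rV[algC]_k.+1) (C : 'M_k.+1), forall n, u n = (Y *m C ^+ n) 0 0.
Proof.
case=> c u_rec.
pose C : 'M[algC]_k.+1 :=
  \matrix_(s, i) if (i < k)%N then ((s : nat) == i.+1)%:R else c s.
pose window n : 'rV[algC]_k.+1 := \row_i u (n + i)%N.
have window_step n : window n *m C = window n.+1.
  apply/rowP => i; rewrite !mxE; under eq_bigr do rewrite !mxE.
  case: (ltnP i k) => [i_lt_k|i_ge_k].
    rewrite (bigD1 (Ordinal (i_lt_k : (i.+1 < k.+1)%N))) //= eqxx mulr1 addnS.
    rewrite big1 ?addr0 // => s s_neq; rewrite eqE /= in s_neq.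
    by rewrite (negbTE s_neq) mulr0.
  have -> : i = ord_max by apply: val_inj; have := ltn_ord i; rewrite /=; lia.
  by rewrite /= addSnnS u_rec; apply: eq_bigr => s _; rewrite mulrC.
have window_pow n : window n = window 0 *m C ^+ n.
  by elim: n => [|n IHn]; rewrite ?mulmx1 // exprSr mulmxA -IHn window_step.
by exists (window 0), C => n; rewrite -window_pow mxE addn0.
Qed.

Lemma has_recurrence_subseq (u : nat -> algC) (k A l : nat) :
  has_recurrence u k -> has_recurrence (fun j => u (A + j * l)%N) k.
Proof.
case: k => [|k] u_rec.
  case: u_rec => c u_rec; exists c => n.
  by have := u_rec (A + (n + 0) * l)%N; rewrite !big_ord0 addn0.
have [Y [C uE]] := has_recurrence_mxpowE u_rec.
have [c sub_rec] := has_recurrence_mxpow (Y *m C ^+ A) (C ^+ l) 0 0.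
have subE j : (Y *m C ^+ A *m (C ^+ l) ^+ j) 0 0 = u (A + j * l)%N.
  by rewrite uE -mulmxA mulmxE -exprM -exprD mulnC.
by exists c => n; rewrite -subE sub_rec; under eq_bigr do rewrite subE.
Qed.

Lemma has_recurrence_eq0 (v : nat -> algC) (k : nat) :
  has_recurrence v k -> (forall j, (j < k)%N -> v j = 0) -> forall j, v j = 0.
Proof.
case=> c v_rec v_init; elim/ltn_ind => j IHj.
have [j_lt_k|j_ge_k] := ltnP j k; first exact: v_init.
rewrite -(subnK j_ge_k) v_rec big1 // => s _.
by rewrite IHj ?mulr0 //; have := ltn_ord s; lia.
Qed.

Lemma expr_unity_mod (R : comUnitRingType) (z y : R) (c : int) (M n a : nat) :
  z ^+ M = 1 -> n = a %[mod M] -> (z ^ c * y) ^+ n = z ^ (c * a%:Z) * y ^+ n.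
Proof.
move=> zM n_mod; rewrite exprMn; congr (_ * _).
have zcM : (z ^ c) ^+ M = 1 by rewrite exprnP exprzAC -exprnP zM exp1rz.
by rewrite -(expr_mod n zcM) n_mod (expr_mod a zcM) -exprz_exp.
Qed.

Lemma mprod_neq0 (r : nat) (gamma : 'I_r -> algC) (w : 'I_r -> int) :
  (forall j, gamma j != 0) -> mprod gamma w != 0.
Proof. by move=> gamma_neq0; apply/prodf_neq0 => j _; apply: expfz_neq0. Qed.

Lemma mprod_expn_inj (r : nat) (gamma : 'I_r -> algC) (l : nat) :
  mult_indep gamma -> (0 < l)%N ->
  injective (fun w : {ffun 'I_r -> int} => mprod gamma w ^+ l).
Proof.
move=> [gamma_neq0 gamma_indep] l_gt0 v w /= vw_eq; apply/ffunP => j.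
pose d j := (v j - w j) * l%:Z.
have : \prod_(j < r) gamma j ^ d j = 1.
  rewrite (eq_bigr (fun j => (gamma j ^ v j / gamma j ^ w j) ^+ l)); last first.
    by move=> i _; rewrite /d -exprz_exp expfzDr // invr_expz.
  rewrite prodrXl prodf_div expr_div_n -!/(mprod _ _) vw_eq divff //.
  by rewrite expf_neq0 // mprod_neq0.
move=> /gamma_indep /(_ j) /eqP; rewrite mulf_eq0 subr_eq0 eqz_nat (gtn_eqF l_gt0) orbF.
by move/eqP.
Qed.

(* Substituting [n = A + j l] turns the sum into a generalized power sum in [j]
   whose bases [mprod gamma w ^+ l] are distinct by multiplicative independence. *)
Lemma mprod_gpsum_progression_eq0 (r : nat) (gamma : 'I_r -> algC)
    (s : seq {ffun 'I_r -> int}) (P : {ffun 'I_r -> int} -> {poly algC}) (A l : nat) :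
  uniq s -> mult_indep gamma -> (0 < l)%N ->
  (forall j, \sum_(w <- s) (P w).[(A + j * l)%:R] * mprod gamma w ^+ (A + j * l) = 0) ->
  {in s, forall w, P w = 0}.
Proof.
move=> s_uniq gamma_indep l_gt0 P_sum0 w ws.
pose Q (v : {ffun 'I_r -> int}) := mprod gamma v ^+ A *: (P v \Po (l%:R *: 'X + A%:R%:P)).
have QE v j : (Q v).[j%:R] = mprod gamma v ^+ A * (P v).[(A + j * l)%:R].
  rewrite hornerZ horner_comp hornerD hornerZ hornerX hornerC.
  by rewrite natrD natrM addrC [l%:R * _]mulrC.
have Q_eq0 : Q w = 0.
  apply: (@gpsum_eq0_polys_eq0 _ _ s Q (fun v => mprod gamma v ^+ l) s_uniq _ _ _ w ws).
  - by move=> x y _ _; apply: mprod_expn_inj.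
  - by move=> v _; rewrite expf_neq0 // mprod_neq0 //; case: gamma_indep.
  move=> j; rewrite /gpsum -[RHS](P_sum0 j); apply: eq_bigr => v _.
  by rewrite QE -exprM exprD mulnC; ring.
apply: (poly_eq0_natr_progression (c := A) l_gt0) => j; apply/eqP.
have := QE w j; rewrite Q_eq0 horner0 => /esym/eqP.
by rewrite mulf_eq0 expf_eq0 (negbTE (mprod_neq0 w gamma_indep.1)) andbF.
Qed.

Lemma sum_U_coef (m r : nat) (g : 'I_m -> {poly algC}) (zeta : algC) (e0 : 'I_m -> int)
    (e : 'I_m -> {ffun 'I_r -> int}) (a : nat) (s : seq {ffun 'I_r -> int})
    (y : {ffun 'I_r -> int} -> algC) (x : algC) :
  uniq s -> (forall i, e i \in s) ->
  \sum_(i < m) (g i).[x] * zeta ^ (e0 i * a%:Z) * y (e i) =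
  \sum_(w <- s) (U_coef g zeta e0 e a w).[x] * y w.
Proof.
move=> s_uniq e_in_s.
transitivity (\sum_(i < m) \sum_(w <- s)
    if e i == w then (g i).[x] * zeta ^ (e0 i * a%:Z) * y w else 0).
  apply: eq_bigr => i _; rewrite (bigD1_seq (e i)) //= eqxx big1 ?addr0 // => w.
  by rewrite eq_sym => /negbTE ->.
rewrite exchange_big /=; apply: eq_bigr => w _.
rewrite /U_coef horner_sum mulr_suml [RHS]big_mkcond; apply: eq_bigr => i _.
by rewrite eq_sym; case: eqP => // ->; rewrite hornerZ [zeta ^ _ * _]mulrC.
Qed.

Theorem corollary4
  (u : nat -> algC) (k : nat)
  (m : nat) (alpha : 'I_m -> algC) (g : 'I_m -> {poly algC})
  (Halpha_nz : forall i, alpha i != 0)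
  (Halpha_inj : injective alpha)
  (Hg_nz : forall i, g i != 0)
  (Hu : forall n : nat, u n = \sum_(i < m) (g i).[n%:R] * alpha i ^+ n)
  (Hk : lrs_order u k)
  (M : nat) (HM : is_period alpha M)
  (zeta : algC) (Hzeta : M.-primitive_root zeta)
  (r : nat) (gamma : 'I_r -> algC) (Hgamma : mult_indep gamma)
  (e0 : 'I_m -> int) (e : 'I_m -> {ffun 'I_r -> int})
  (Hdec : forall i, alpha i = zeta ^ e0 i * \prod_(j < r) gamma j ^ e i j)
  (a A l : nat)
  (Ha : (1 <= a <= M)%N) (HA : A = a %[mod M])
  (Hl : (0 < l)%N) (HMl : (M %| l)%N)
  (Hzeros : forall j : nat, (j < k)%N -> u (A + j * l)%N = 0) :
  U_zero g zeta e0 e a /\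
  (forall n : nat, n = a %[mod M] -> u n = 0).
Proof.
pose S := undup [seq e i | i <- enum 'I_m].
have e_in_S i : e i \in S by rewrite mem_undup map_f ?mem_enum.
have u_expand n : n = a %[mod M] ->
    u n = \sum_(w <- S) (U_coef g zeta e0 e a w).[n%:R] * mprod gamma w ^+ n.
  move=> n_mod; rewrite Hu -sum_U_coef ?undup_uniq //; apply: eq_bigr => i _.
  by rewrite Hdec (expr_unity_mod _ _ (prim_expr_order Hzeta) n_mod) -/(mprod _ _) mulrA.
have progression_mod j : (A + j * l = a %[mod M])%N.
  by rewrite -modnDmr (eqP (dvdn_mull j HMl)) addn0.
have u_progression_eq0 : forall j, u (A + j * l)%N = 0.
  exact: has_recurrence_eq0 (has_recurrence_subseq A l Hk.1) Hzeros.
have U_eq0 : U_zero g zeta e0 e a.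
  move=> w; have [wS|wNS] := boolP (w \in S).
    apply: (mprod_gpsum_progression_eq0 (undup_uniq _) Hgamma Hl _ wS) => j.
    by rewrite -u_expand ?u_progression_eq0.
  rewrite /U_coef big_pred0 // => i; apply: contraNF wNS => /eqP <-; exact: e_in_S.
split=> // n n_mod; rewrite u_expand // big1_seq // => w _.
by rewrite U_eq0 horner0 mul0r.
Qed.
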